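(* Let $n\ge1$, $r\ge0$ an integer, and $g,h$ formal power series in one variable. Then $$\int\mathcal{D}_n(\psi,\bar\psi)\,(\bar\psi,\psi)^r\,\exp\!\Big[h\big((\bar\psi,\psi)\big)+(\bar\psi,J\psi)\,g\big((\bar\psi,\psi)\big)\Big]=\int\mathcal{D}_n(\psi,\bar\psi)\,(\bar\psi,\psi)^r\,e^{h((\bar\psi,\psi))}\Big[1+(\bar\psi,\psi)\,g\big((\bar\psi,\psi)\big)\Big].$$
   Context: Grassmann algebra over $\mathbb{C}$ generated by anticommuting $\psi_1,\dots,\psi_n,\bar\psi_1,\dots,\bar\psi_n$; $\int\mathcal{D}_n(\psi,\bar\psi)$ is the Berezin integral returning the coefficient of $\prod_{i=1}^n(\bar\psi_i\psi_i)$ (convention $\int d\bar\psi_i d\psi_i\,\bar\psi_i\psi_i=1$). $(\bar\psi,\psi):=\sum_{i=1}^n\bar\psi_i\psi_i$ and $(\bar\psi,J\psi):=\sum_{i,j=1}^n\bar\psi_i\psi_j$, where $J$ is the $n\times n$ all-ones matrix. Functions of the nilpotent even elements are defined by their (terminating) power series. *)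

From HB Require Import structures.
From mathcomp Require Import all_boot all_order all_algebra.
Set Implicit Arguments. Unset Strict Implicit. Unset Printing Implicit Defensive.
Import Order.TTheory GRing.Theory Num.Theory.
Local Open Scope ring_scope.

(* Generators: (i, false) = psibar_(i+1), (i, true) = psi_(i+1).
   They are totally ordered by grank:
   psibar_1 < psi_1 < psibar_2 < psi_2 < ... < psibar_n < psi_n. *)
Definition gen (n : nat) : finType := ('I_n * bool)%type.
Definition grank (n : nat) (x : gen n) : nat := (2 * x.1 + x.2)%N.

(* An element of the Grassmann algebra: the coefficient of the ordered
   monomial e_S = prod_{x in S, increasing grank} x, for each subset S. *)
Definition grass (R : nzRingType) (n : nat) := {ffun {set gen n} -> R}.

(* sign of e_A e_B = sgn * e_(A u B) for disjoint A, B *)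
Definition gsign (R : nzRingType) (n : nat) (A B : {set gen n}) : R :=
  (-1) ^+ #|[set p : gen n * gen n |
              (p.1 \in A) && (p.2 \in B) && (grank p.2 < grank p.1)%N]|.

Definition gmul (R : nzRingType) (n : nat) (a b : grass R n) : grass R n :=
  [ffun S : {set gen n} =>
     \sum_(A : {set gen n} | A \subset S) gsign R A (S :\: A) * a A * b (S :\: A)].

Definition gadd (R : nzRingType) (n : nat) (a b : grass R n) : grass R n :=
  [ffun S => a S + b S].

Definition gscal (R : nzRingType) (n : nat) (c : R) : grass R n :=
  [ffun S : {set gen n} => if S == set0 then c else 0].

Definition gone (R : nzRingType) (n : nat) : grass R n := gscal n 1.

Definition gscale (R : nzRingType) (n : nat) (c : R) (a : grass R n) : grass R n :=
  [ffun S => c * a S].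

Definition ggen (R : nzRingType) (n : nat) (x : gen n) : grass R n :=
  [ffun S : {set gen n} => if S == [set x] then 1 else 0].

Definition psibar (R : nzRingType) (n : nat) (i : 'I_n) : grass R n := ggen R (i, false).
Definition psi (R : nzRingType) (n : nat) (i : 'I_n) : grass R n := ggen R (i, true).

Definition gsum (R : nzRingType) (n : nat) (I : finType) (F : I -> grass R n) : grass R n :=
  [ffun S => \sum_(i : I) F i S].

Definition gpow (R : nzRingType) (n : nat) (a : grass R n) (k : nat) : grass R n :=
  iter k (gmul a) (gone R n).

(* (psibar, psi) = sum_i psibar_i psi_i *)
Definition pp (R : nzRingType) (n : nat) : grass R n :=
  gsum (fun i : 'I_n => gmul (psibar R i) (psi R i)).

(* (psibar, J psi) = sum_{i,j} psibar_i psi_j *)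
Definition pJp (R : nzRingType) (n : nat) : grass R n :=
  gsum (fun ij : 'I_n * 'I_n => gmul (psibar R ij.1) (psi R ij.2)).

(* Evaluation of a formal power series f = sum_k f k X^k at an element X
   with zero body (constant part): every product of 2n+1 generators
   vanishes, so X^(2n+1) = 0 and the series terminates. *)
Definition psev (R : nzRingType) (n : nat) (f : nat -> R) (X : grass R n) : grass R n :=
  gsum (fun k : 'I_(2 * n).+1 => gscale (f k) (gpow X k)).

(* Exponential of an even element X = c + N with body c = X set0 and
   N nilpotent: exp X = e^c * sum_k N^k / k!.  The scalar exponential
   e^c is supplied by the parameter expR (over C this is the usual exp). *)
Definition gexp (R : fieldType) (expR : R -> R) (n : nat) (X : grass R n) : grass R n :=
  let N := gadd X (gscal n (- X set0)) in
  gscale (expR (X set0))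
         (gsum (fun k : 'I_(2 * n).+1 => gscale (k`!%:R)^-1 (gpow N k))).

(* Berezin integral: coefficient of prod_{i=1}^n (psibar_i psi_i), which is
   exactly the ordered top monomial e_{setT} for our ordering. *)
Definition berezin (R : nzRingType) (n : nat) (a : grass R n) : R := a setT.

(* Elements are controlled through their support (the monomials
   carrying a nonzero coefficient): elements supported on even monomials are
   central, elements supported on odd monomials anticommute (hence square to
   zero in characteristic 0), and supports add up under products.

   Writing A = (psibar, psi) and B = (psibar, J psi), three facts give the
   theorem:
   - B = (sum_i psibar_i) (sum_j psi_j) is a product of two odd elements,
     hence B * B = 0; so for Y = B g(A) (even, Y * Y = 0) one gets
     exp (h(A) + Y) = exp (h(A)) (1 + Y), as the binomial expansion of
     the exponential series stops at first order in Y;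
   - every polynomial in A, and its exponential, is "paired": each of its
     monomials contains psibar_i exactly when it contains psi_i;
   - for paired F the top coefficient of F psibar_i psi_j vanishes if i <> j,
     so the Berezin integral of F B equals that of F A. *)
From HB Require Import structures.
From mathcomp Require Import all_boot all_order all_algebra ring.
Set Implicit Arguments. Unset Strict Implicit. Unset Printing Implicit Defensive.
Import Order.TTheory GRing.Theory Num.Theory.
Local Open Scope ring_scope.

Section SetComplements.
Variable T : finType.
Implicit Types A B : {set T}.

Lemma setUDS A B : A \subset B -> A :|: (B :\: A) = B.
Proof.
move=> sAB; apply/setP=> x; rewrite !inE.
by case: (boolP (x \in A)) => //= /(subsetP sAB) ->.
Qed.

Lemma setDDS A B : A \subset B -> B :\: (B :\: A) = A.
Proof. by move=> sAB; rewrite setDDr setDv set0U; apply/setIidPr. Qed.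

Lemma disjoint_setD A B : [disjoint A & B :\: A].
Proof. by rewrite disjoint_sym; have /subsetDP[] := subxx (B :\: A). Qed.

Lemma cardsDS A B : A \subset B -> #|B| = (#|A| + #|B :\: A|)%N.
Proof. by move=> sAB; rewrite -(cardsID A B) (setIidPr sAB). Qed.

End SetComplements.

Section Inversions.
Variable n : nat.
Implicit Types X Y Z : {set gen n}.

Definition invs X Y : {set gen n * gen n} :=
  [set p | (p.1 \in X) && (p.2 \in Y) && (grank p.2 < grank p.1)%N].

Lemma grank_inj : injective (@grank n).
Proof.
move=> [i b] [j c]; rewrite /grank /= !mul2n => E.
have eq_bc : b = c.
  by move: (congr1 odd E); rewrite !oddD !odd_double; case: (b); case: (c).
subst c; move/eqP: E; rewrite eqn_add2r -!muln2 eqn_pmul2r //.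
by move=> /eqP/val_inj->.
Qed.

Lemma card_invsUl X Y Z : [disjoint X & Y] ->
  #|invs (X :|: Y) Z| = (#|invs X Z| + #|invs Y Z|)%N.
Proof.
move=> dXY; have -> : invs (X :|: Y) Z = invs X Z :|: invs Y Z.
  by apply/setP=> p; rewrite !inE !andb_orl.
rewrite cardsU; suff -> : invs X Z :&: invs Y Z = set0 by rewrite cards0 subn0.
apply/setP=> p; rewrite !inE; case hX: (p.1 \in X) => //=.
by rewrite (disjointFr dXY hX) !andbF.
Qed.

Lemma card_invsUr X Y Z : [disjoint Y & Z] ->
  #|invs X (Y :|: Z)| = (#|invs X Y| + #|invs X Z|)%N.
Proof.
move=> dYZ; have -> : invs X (Y :|: Z) = invs X Y :|: invs X Z.
  by apply/setP=> p; rewrite !inE andb_orr andb_orl.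
rewrite cardsU; suff -> : invs X Y :&: invs X Z = set0 by rewrite cards0 subn0.
apply/setP=> p; rewrite !inE; case hY: (p.2 \in Y); rewrite ?andbF //=.
by rewrite (disjointFr dYZ hY) !andbF.
Qed.

(* Every pair of X * Y is an inversion either of (X, Y) or of (Y, X). *)
Lemma card_invs_swap X Y : [disjoint X & Y] ->
  (#|invs X Y| + #|invs Y X|)%N = (#|X| * #|Y|)%N.
Proof.
move=> dXY; pose sw (p : gen n * gen n) := (p.2, p.1).
have swK : involutive sw by case.
set I2 := [set p : gen n * gen n |
             (p.1 \in X) && (p.2 \in Y) && (grank p.1 < grank p.2)%N].
have -> : invs Y X = sw @: I2.
  apply/setP=> p; rewrite -[p]swK (mem_imset _ _ (inv_inj swK)) !inE swK /=.
  by rewrite (andbC (p.1 \in Y)).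
rewrite card_imset; last exact: inv_inj.
rewrite -cardsX -cardsUI.
have -> : invs X Y :&: I2 = set0.
  by apply/setP=> p; rewrite !inE; case: ltngtP; rewrite !andbF.
rewrite cards0 addn0; apply: eq_card => p; rewrite !inE.
case h1: (p.1 \in X); case h2: (p.2 \in Y) => //=.
have ne : p.1 != p.2 by apply: contraTneq h2 => <-; rewrite (disjointFr dXY h1).
by rewrite -neq_ltn (inj_eq grank_inj) eq_sym.
Qed.

End Inversions.

Section GrassmannProduct.
Variables (R : comNzRingType) (n : nat).
Implicit Types (X Y Z S A : {set gen n}) (a b c : grass R n).

Lemma gsign_sq X Y : gsign R X Y * gsign R X Y = 1.
Proof. by rewrite -exprD -signr_odd addnn odd_double expr0. Qed.

Lemma gsignUl X Y Z : [disjoint X & Y] ->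
  gsign R (X :|: Y) Z = gsign R X Z * gsign R Y Z.
Proof. by move=> dXY; rewrite /gsign -exprD -(card_invsUl _ dXY). Qed.

Lemma gsignUr X Y Z : [disjoint Y & Z] ->
  gsign R X (Y :|: Z) = gsign R X Y * gsign R X Z.
Proof. by move=> dYZ; rewrite /gsign -exprD -(card_invsUr _ dYZ). Qed.

Lemma gsign_swap X Y : [disjoint X & Y] ->
  gsign R X Y * gsign R Y X = (-1) ^+ (#|X| * #|Y|).
Proof. by move=> dXY; rewrite /gsign -exprD -(card_invs_swap dXY). Qed.

Lemma gsign0l X : gsign R set0 X = 1.
Proof.
by rewrite /gsign (_ : [set _ | _] = set0) ?cards0 //; apply/setP=> p; rewrite !inE.
Qed.

Lemma gsign0r X : gsign R X set0 = 1.
Proof.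
by rewrite /gsign (_ : [set _ | _] = set0) ?cards0 //; apply/setP=> p; rewrite !inE andbF.
Qed.

Lemma gmulE a b S :
  gmul a b S = \sum_(A : {set gen n} | A \subset S) gsign R A (S :\: A) * a A * b (S :\: A).
Proof. by rewrite ffunE. Qed.

Lemma gmul1l a : gmul (gone R n) a = a.
Proof.
apply/ffunP=> S; rewrite gmulE (bigD1 set0) ?sub0set //= big1.
  by rewrite addr0 gsign0l mul1r ffunE eqxx mul1r setD0.
by move=> D /andP[_ hD]; rewrite ffunE (negbTE hD) mulr0 mul0r.
Qed.

Lemma gmul1r a : gmul a (gone R n) = a.
Proof.
apply/ffunP=> S; rewrite gmulE (bigD1 S) ?subxx //= big1.
  by rewrite addr0 setDv gsign0r mul1r ffunE eqxx mulr1.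
move=> D /andP[hDS hD]; rewrite ffunE setD_eq0.
by case: ifP => [hSD|_]; [move: hD; rewrite eqEsubset hDS hSD | rewrite mulr0].
Qed.

Lemma gmulDl a b c : gmul (gadd a b) c = gadd (gmul a c) (gmul b c).
Proof.
apply/ffunP=> S; rewrite !ffunE -big_split; apply: eq_bigr => D _ /=.
by rewrite ffunE mulrDr mulrDl.
Qed.

Lemma gmulDr a b c : gmul a (gadd b c) = gadd (gmul a b) (gmul a c).
Proof.
apply/ffunP=> S; rewrite !ffunE -big_split; apply: eq_bigr => D _ /=.
by rewrite ffunE mulrDr.
Qed.

(* Associativity: both sides sum over decompositions S = A u B u C, and
   the signs agree by additivity of inversion counts. *)
Lemma gmulA a b c : gmul a (gmul b c) = gmul (gmul a b) c.
Proof.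
apply/ffunP=> S; rewrite !gmulE.
under eq_bigr => A _ do rewrite gmulE mulr_sumr.
under [RHS]eq_bigr => D _ do rewrite gmulE mulr_sumr mulr_suml.
rewrite [RHS](exchange_big_dep (fun A => A \subset S)) /=; last first.
  by move=> D A hD hA; exact: (subset_trans hA hD).
apply: eq_bigr => A hAS.
rewrite [RHS](reindex_onto (fun B => A :|: B) (fun D => D :\: A)) /=; last first.
  by move=> D /andP[_ hAD]; rewrite setUDS.
apply: eq_big => [B|B hB].
  rewrite subsetD subUset hAS subsetUl /= setDUl setDv set0U.
  by case: (B \subset S) => //=; apply/idP/eqP => /setDidPl.
move: (hB); rewrite subsetD => /andP[hBS dBA].
have dAB : [disjoint A & B] by rewrite disjoint_sym.
have -> : (A :|: B) :\: A = B by rewrite setDUl setDv set0U; apply/setDidPl.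
rewrite -setDDl; set C := S :\: A :\: B.
have dBC : [disjoint B & C] by exact: disjoint_setD.
rewrite -(setUDS hB) gsignUr // gsignUl //; ring.
Qed.

Lemma gone_neq0 : gone R n != 0.
Proof. by apply/eqP => /ffunP /(_ set0) /eqP; rewrite !ffunE eqxx oner_eq0. Qed.

End GrassmannProduct.

Definition grass_ring (R : comNzRingType) (n : nat) : Type := grass R n.
HB.instance Definition _ (R : comNzRingType) (n : nat) :=
  GRing.Zmodule.on (grass_ring R n).
HB.instance Definition _ (R : comNzRingType) (n : nat) :=
  GRing.Zmodule_isNzRing.Build (grass_ring R n) (@gmulA R n) (@gmul1l R n)
    (@gmul1r R n) (@gmulDl R n) (@gmulDr R n) (@gone_neq0 R n).

Section Coordinates.
Variables (R : comNzRingType) (n : nat).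
Local Notation G := (grass_ring R n).
Implicit Types (a b : G) (S D : {set gen n}).

Lemma coefD a b S : (a + b) S = a S + b S.
Proof. by rewrite ffunE. Qed.

Lemma coefN a S : (- a) S = - a S.
Proof. by rewrite ffunE. Qed.

Lemma coef0 S : (0 : G) S = 0.
Proof. by rewrite ffunE. Qed.

Lemma coef_sum (I : finType) (P : pred I) (F : I -> G) S :
  (\sum_(i | P i) F i) S = \sum_(i | P i) F i S.
Proof. exact: sum_ffunE. Qed.

Lemma coefM a b S :
  (a * b) S = \sum_(D : {set gen n} | D \subset S) gsign R D (S :\: D) * a D * b (S :\: D).
Proof. exact: gmulE. Qed.

Lemma coefM_rev a b S :
  (b * a) S = \sum_(D : {set gen n} | D \subset S) gsign R (S :\: D) D * b (S :\: D) * a D.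
Proof.
rewrite coefM (reindex_onto (fun D => S :\: D) (fun D => S :\: D)) /=; last first.
  by move=> D hD; rewrite setDDS.
apply: eq_big => [D|D /andP[_ /eqP ->]] //.
rewrite subsetDl /=; apply/eqP/idP => [<-|h]; [exact: subsetDl|exact: setDDS].
Qed.

Lemma gaddE a b : gadd a b = a + b.  Proof. by []. Qed.
Lemma gmulM a b : gmul a b = a * b.  Proof. by []. Qed.
Lemma goneE : gone R n = 1 :> G.  Proof. by []. Qed.

Lemma gpowE a k : gpow a k = a ^+ k.
Proof. by elim: k => [|k IH] //=; rewrite exprS -IH. Qed.

Lemma gsumE (I : finType) (F : I -> G) : gsum F = \sum_i F i.
Proof. by apply/ffunP=> S; rewrite coef_sum ffunE. Qed.

Definition sc (k : R) : G := gscal n k.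

Lemma coef_scM k a S : (sc k * a) S = k * a S.
Proof.
rewrite coefM (bigD1 set0) ?sub0set //= big1.
  by rewrite addr0 gsign0l mul1r ffunE eqxx setD0.
by move=> D /andP[_ hD]; rewrite ffunE (negbTE hD) mulr0 mul0r.
Qed.

Lemma sc1 : sc 1 = 1.  Proof. by []. Qed.

Lemma gscaleE k a : gscale k a = sc k * a.
Proof. by apply/ffunP=> S; rewrite coef_scM ffunE. Qed.

Lemma coef_sc k S : sc k S = if S == set0 then k else 0.
Proof. by rewrite ffunE. Qed.

Lemma scD k l : sc (k + l) = sc k + sc l.
Proof. by apply/ffunP=> S; rewrite coefD !ffunE; case: ifP; rewrite ?addr0. Qed.

Lemma scMn k m : sc (k *+ m) = sc k *+ m.
Proof.
elim: m => [|m IH]; last by rewrite !mulrS scD IH.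
by apply/ffunP=> S; rewrite coef0 ffunE; case: ifP.
Qed.

End Coordinates.

Section Supports.
Variables (R : comNzRingType) (n : nat).
Local Notation G := (grass_ring R n).
Implicit Types (a b c : G) (S D X Y : {set gen n}).

Definition supp (P : {set gen n} -> Prop) a := forall S, a S != 0 -> P S.

Lemma suppD P a b : supp P a -> supp P b -> supp P (a + b).
Proof.
move=> ha hb S; rewrite coefD.
by case: (eqVneq (a S) 0) => [->|/ha //]; rewrite add0r; exact: hb.
Qed.

Lemma supp_sum P (I : finType) (Q : pred I) (F : I -> G) :
  (forall i, Q i -> supp P (F i)) -> supp P (\sum_(i | Q i) F i).
Proof.
move=> hF; apply: (big_ind (supp P)) => //; last exact: suppD.
by move=> S; rewrite coef0 eqxx.
Qed.

(* A nonzero coefficient of a product comes from nonzero coefficients of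
   the factors on complementary monomials. *)
Lemma suppM (P Q T : {set gen n} -> Prop) a b :
  supp P a -> supp Q b ->
  (forall D S, D \subset S -> P D -> Q (S :\: D) -> T S) -> supp T (a * b).
Proof.
move=> ha hb PQT S; rewrite coefM => nz.
have [D /and3P[hDS aD bD] | none] :=
  pickP (fun D => [&& D \subset S, a D != 0 & b (S :\: D) != 0]).
  exact: PQT hDS (ha _ aD) (hb _ bD).
move: nz; rewrite big1 ?eqxx // => D hDS; move: (none D); rewrite hDS /=.
by case: (eqVneq (a D) 0) => [->|_ /negbFE/eqP->]; rewrite ?mulr0 ?mul0r.
Qed.

Lemma supp_ggen (x : gen n) : supp (fun S => S = [set x]) (ggen R x : G).
Proof. by move=> S; rewrite ffunE; case: ifP => [/eqP //|_]; rewrite eqxx. Qed.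

Lemma supp_gscal (k : R) : supp (fun S => S = set0) (gscal n k : G).
Proof. by move=> S; rewrite ffunE; case: ifP => [/eqP //|_]; rewrite eqxx. Qed.

Definition mul_closed (P : {set gen n} -> Prop) :=
  P set0 /\ forall D S, D \subset S -> P D -> P (S :\: D) -> P S.

Section MulClosed.
Variables (P : {set gen n} -> Prop) (hP : mul_closed P).

Lemma supp_scal (k : R) : supp P (sc n k).
Proof. by case: hP => P0 _ S /supp_gscal ->. Qed.

Lemma suppMc a b : supp P a -> supp P b -> supp P (a * b).
Proof. by move=> ha hb; apply: suppM ha hb _; case: hP. Qed.

Lemma supp_exp a k : supp P a -> supp P (a ^+ k).
Proof.
move=> ha; elim: k => [|k IH]; first by rewrite expr0 -sc1; exact: supp_scal.
by rewrite exprS; apply: suppMc.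
Qed.

Lemma supp_psev f a : supp P a -> supp P (psev f a).
Proof.
move=> ha; rewrite /psev gsumE; apply: supp_sum => k _.
by rewrite gscaleE gpowE; apply: suppMc; [exact: supp_scal|exact: supp_exp].
Qed.

End MulClosed.

Definition evs S := ~~ odd #|S|.
Definition ods S := odd #|S|.

Lemma gsign_sym X Y : [disjoint X & Y] -> ~~ odd (#|X| * #|Y|) ->
  gsign R Y X = gsign R X Y.
Proof.
move=> dXY ev; have := gsign_swap R dXY; rewrite -signr_odd (negbTE ev) expr0.
by move=> h; rewrite -[LHS]mul1r -(gsign_sq R X Y) -mulrA h mulr1.
Qed.

Lemma gsign_asym X Y : [disjoint X & Y] -> odd (#|X| * #|Y|) ->
  gsign R Y X = - gsign R X Y.
Proof.
move=> dXY od; have := gsign_swap R dXY; rewrite -signr_odd od expr1.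
by move=> h; rewrite -[LHS]mul1r -(gsign_sq R X Y) -mulrA h mulrN1.
Qed.

Lemma even_comm a : supp evs a -> forall b, a * b = b * a.
Proof.
move=> ha b; apply/ffunP=> S; rewrite (coefM a b) (coefM_rev a b); apply: eq_bigr => D _.
have [->|/ha evD] := eqVneq (a D) 0; first by rewrite !(mulr0, mul0r).
rewrite [in RHS]gsign_sym ?disjoint_setD ?oddM ?(negbTE evD) //.
by rewrite -!mulrA [a D * _]mulrC.
Qed.

Lemma odd_anticomm a b : supp ods a -> supp ods b -> a * b = - (b * a).
Proof.
move=> ha hb; apply/ffunP=> S; rewrite coefN (coefM a b) (coefM_rev a b) -sumrN.
apply: eq_bigr => D _.
have [->|/ha odD] := eqVneq (a D) 0; first by rewrite !(mulr0, mul0r, oppr0).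
have [->|/hb odSD] := eqVneq (b (S :\: D)) 0; first by rewrite !(mulr0, mul0r, oppr0).
rewrite [in RHS]gsign_asym ?disjoint_setD ?oddM //; last exact/andP.
by rewrite !mulNr opprK -!mulrA [a D * _]mulrC.
Qed.

Lemma mul_closed_evs : mul_closed evs.
Proof.
split=> [|D S sDS]; first by rewrite /evs cards0.
by rewrite /evs (cardsDS sDS) oddD => /negbTE-> /negbTE->.
Qed.

Lemma suppM_odd a b : supp ods a -> supp ods b -> supp evs (a * b).
Proof.
move=> ha hb; apply: suppM ha hb _ => D S sDS odD odSD.
by rewrite /evs (cardsDS sDS) oddD; rewrite /ods in odD odSD; rewrite odD odSD.
Qed.

Definition dg d S := (d <= #|S|)%N.

Lemma suppM_dg p q a b : supp (dg p) a -> supp (dg q) b -> supp (dg (p + q)) (a * b).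
Proof.
move=> ha hb; apply: suppM ha hb _ => D S sDS hD hSD.
by rewrite /dg (cardsDS sDS) leq_add.
Qed.

Lemma supp_dg0 a : supp (dg 0) a.
Proof. by []. Qed.

Lemma supp_dg_exp d a k : supp (dg d) a -> supp (dg (d * k)) (a ^+ k).
Proof.
move=> ha; elim: k => [|k IH]; first by rewrite muln0; exact: supp_dg0.
by rewrite exprS mulnS; apply: suppM_dg.
Qed.

Lemma supp_dg_eq0 d a : (2 * n < d)%N -> supp (dg d) a -> a = 0.
Proof.
move=> hd ha; apply/ffunP=> S; rewrite coef0; apply/eqP/negP => /negP /ha dS.
have cardS : (#|S| <= 2 * n)%N.
  by rewrite (leq_trans (max_card _)) // card_prod card_ord card_bool mulnC.
by move: (leq_trans dS cardS); rewrite leqNgt hd.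
Qed.

Lemma supp_body0 a : a set0 = 0 -> supp (dg 1) a.
Proof. by move=> a0 S; rewrite /dg card_gt0; apply: contraNneq => ->; rewrite a0. Qed.

End Supports.
Arguments evs {n} S.
Arguments ods {n} S.
Arguments dg {n} d S.
Arguments supp_ggen {R n} x S.
Arguments mul_closed_evs {n}.

Section Fermions.
Variables (R : comNzRingType) (n : nat).
Local Notation G := (grass_ring R n).
Local Notation pb i := (psibar R i : G).
Local Notation ps i := (psi R i : G).
Implicit Types (F : G) (S D : {set gen n}).

Lemma supp_ggen_odd (x : gen n) : supp ods (ggen R x : G).
Proof. by move=> S /supp_ggen ->; rewrite /ods cards1. Qed.

Lemma supp_ggen_dg1 (x : gen n) : supp (dg 1) (ggen R x : G).
Proof. by move=> S /supp_ggen ->; rewrite /dg cards1. Qed.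

Lemma ppE : (pp R n : G) = \sum_i pb i * ps i.
Proof. exact: gsumE. Qed.

Lemma pJpE : (pJp R n : G) = \sum_i \sum_j pb i * ps j.
Proof. by rewrite /pJp gsumE pair_big. Qed.

Lemma pJp_factor : (pJp R n : G) = (\sum_i pb i) * (\sum_j ps j).
Proof. by rewrite pJpE mulr_suml; apply: eq_bigr => i _; rewrite mulr_sumr. Qed.

Lemma supp_pp_even : supp evs (pp R n : G).
Proof. by rewrite ppE; apply: supp_sum => i _; apply: suppM_odd; apply: supp_ggen_odd. Qed.

Lemma supp_pJp_dg1 : supp (dg 1) (pJp R n : G).
Proof.
rewrite pJpE; apply: supp_sum => i _; apply: supp_sum => j _.
by apply: (@suppM_dg _ _ 1 0); [exact: supp_ggen_dg1 | exact: supp_dg0].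
Qed.

Definition paired S := forall i : 'I_n, ((i, false) \in S) = ((i, true) \in S).

Lemma mul_closed_paired : mul_closed paired.
Proof.
split=> [i|D S sDS pD pSD i]; first by rewrite !inE.
by rewrite -(setUDS sDS) !in_setU pD pSD.
Qed.

Lemma supp_pp_paired : supp paired (pp R n : G).
Proof.
rewrite ppE; apply: supp_sum => i _.
apply: (suppM (supp_ggen (i, false)) (supp_ggen (i, true))) => D S sDS eD hSD k.
subst D; rewrite -(setUDS sDS) {}hSD !in_setU !in_set1 !xpair_eqE /=.
by rewrite andbT andbF orbF.
Qed.

(* For paired F and i <> j, the top coefficient of F psibar_i psi_j vanishes:
   the complementary monomial of F would contain psi_i but not psibar_i. *)
Lemma top_coef_offdiag F i j : supp paired F -> i != j -> (F * (pb i * ps j)) setT = 0.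
Proof.
move=> hF ij.
have hij : supp (fun S => S = [set (i, false); (j, true)]) (pb i * ps j).
  apply: (suppM (supp_ggen (i, false)) (supp_ggen (j, true))) => D S sDS eD hSD.
  by rewrite -(setUDS sDS) hSD eD.
have : supp (fun S => S != setT) (F * (pb i * ps j)).
  apply: suppM hF hij _ => D S sDS pD eSD; apply/eqP => ST.
  have tSD : (i, true) \notin S :\: D.
    by rewrite eSD !inE !xpair_eqE (negbTE ij) andbF.
  have fSD : (i, false) \in S :\: D by rewrite eSD !inE eqxx.
  by move: tSD fSD; rewrite !inE ST !inE pD; case: ((i, true) \in D).
by move=> h; apply/eqP; apply: contraTT isT => /(h setT); rewrite /= eqxx.
Qed.

(* The Berezin integral sees (psibar, J psi) as (psibar, psi) after a
   paired factor: only the diagonal terms i = j survive. *)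
Lemma top_coef_pJp F : supp paired F -> (F * pJp R n) setT = (F * pp R n) setT.
Proof.
move=> hF; rewrite pJpE ppE !mulr_sumr !coef_sum; apply: eq_bigr => i _.
rewrite mulr_sumr coef_sum (bigD1 i) //= big1 ?addr0 // => j ji.
by apply: top_coef_offdiag; rewrite // eq_sym.
Qed.

End Fermions.
Arguments paired {n} S.
Arguments mul_closed_paired {n}.
Arguments supp_pp_even {R n}.
Arguments supp_pJp_dg1 {R n}.
Arguments supp_pp_paired {R n}.

Section CharZero.
Variables (R : numDomainType) (n : nat).
Local Notation G := (grass_ring R n).

Lemma odd_sq0 (b : G) : supp ods b -> b * b = 0.
Proof.
move=> hb; have bb := odd_anticomm hb hb.
apply/ffunP=> S; rewrite coef0; apply/eqP.
have := congr1 (fun y : G => y S) bb; rewrite /= coefN => /eqP.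
by rewrite -subr_eq0 opprK -mulr2n mulrn_eq0.
Qed.

(* (psibar, J psi)^2 = 0, since (sum_j psi_j)^2 = 0. *)
Lemma pJp_sq0 : (pJp R n : G) * pJp R n = 0.
Proof.
set bb := \sum_i (psibar R i : G); set b := \sum_j (psi R j : G).
have obb : supp ods bb by apply: supp_sum => i _; exact: supp_ggen_odd.
have ob : supp ods b by apply: supp_sum => j _; exact: supp_ggen_odd.
rewrite pJp_factor -/bb -/b mulrA -(mulrA bb) (odd_anticomm ob obb).
by rewrite mulrN mulNr -!mulrA odd_sq0 // !mulr0 oppr0.
Qed.

End CharZero.

Section Exponential.
Variables (R : numFieldType) (n : nat).
Local Notation G := (grass_ring R n).
Implicit Types (M X Y : G).

Definition expser Y : G := \sum_(k < (2 * n).+1) sc n (k`!%:R^-1) * Y ^+ k.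

Lemma gexpE expR X :
  (gexp expR X : G) = sc n (expR (X set0)) * expser (X + sc n (- X set0)).
Proof.
rewrite /gexp gscaleE gsumE /expser; apply: congr1; apply: eq_bigr => k _.
by rewrite gscaleE gpowE.
Qed.

Lemma exp_add_sq0 M Y k : M * Y = Y * M -> Y * Y = 0 ->
  (M + Y) ^+ k.+1 = M ^+ k.+1 + (M ^+ k * Y) *+ k.+1.
Proof.
move=> cMY YY; elim: k => [|k IH]; first by rewrite !expr1 expr0 mul1r.
have cYX j : Y * M ^+ j = M ^+ j * Y by apply: commrX; rewrite /GRing.comm cMY.
rewrite exprS IH mulrDl !mulrDr !mulrnAr mulrA -exprS cYX -exprS mulrA cYX.
by rewrite -mulrA YY mulr0 mul0rn addr0 -addrA -mulrSr.
Qed.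

(* exp (M + Y) = exp M (1 + Y) for the truncated series; the hypothesis on
   M^(2n) Y accounts for the truncation. *)
Lemma expser_add_sq0 M Y : M * Y = Y * M -> Y * Y = 0 -> M ^+ (2 * n) * Y = 0 ->
  expser (M + Y) = expser M * (1 + Y).
Proof.
move=> cMY YY MY0.
have EY : expser M * Y = \sum_(i < 2 * n) sc n (i`!%:R^-1) * (M ^+ i * Y).
  rewrite /expser mulr_suml big_ord_recr /= -mulrA MY0 mulr0 addr0.
  by apply: eq_bigr => i _; rewrite -mulrA.
rewrite mulrDr mulr1 EY /expser !big_ord_recl /= !expr0 -addrA; congr (_ + _).
rewrite -big_split /=; apply: eq_bigr => i _.
rewrite exp_add_sq0 // mulrDr; congr (_ + _).
rewrite /bump /= add1n mulrnAr -mulrnAl -scMn; congr (sc n _ * _).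
by rewrite factS natrM invfM -[_ *+ i.+1]mulr_natr mulrAC mulVf ?mul1r // pnatr_eq0.
Qed.

Lemma gexp_add_sq0 expR X Y : supp (dg 1) Y -> X * Y = Y * X -> Y * Y = 0 ->
  (gexp expR (X + Y) : G) = (gexp expR X : G) * (1 + Y).
Proof.
move=> Y1 cXY YY; rewrite !gexpE -mulrA.
have Y0 : Y set0 = 0 by apply/eqP; apply: contraTT isT => /Y1; rewrite /dg cards0.
rewrite coefD Y0 addr0 addrAC; apply: congr1.
set M := X + sc n (- X set0).
have M1 : supp (dg 1) M by apply: supp_body0; rewrite coefD coef_sc eqxx subrr.
apply: expser_add_sq0 => //.
  rewrite /M mulrDl mulrDr cXY; congr (_ + _); apply: even_comm.
  exact: (supp_scal mul_closed_evs).
apply: (@supp_dg_eq0 _ _ (1 * (2 * n) + 1)); first by rewrite mul1n addn1.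
by apply: suppM_dg Y1; apply: supp_dg_exp.
Qed.

Lemma supp_gexp P expR X : mul_closed P -> supp P X -> supp P (gexp expR X : G).
Proof.
move=> hP hX; rewrite gexpE; apply: suppMc => //; first exact: supp_scal.
apply: supp_sum => k _; apply: suppMc => //; first exact: supp_scal.
by apply: supp_exp => //; apply: suppD => //; exact: supp_scal.
Qed.

End Exponential.

Theorem lemma3 (R : numClosedFieldType) (expR : R -> R) (n : nat) (hn : (1 <= n)%N)
    (r : nat) (g h : nat -> R) :
  berezin (gmul (gpow (pp R n) r)
                (gexp expR (gadd (psev h (pp R n)) (gmul (pJp R n) (psev g (pp R n))))))
  =
  berezin (gmul (gpow (pp R n) r)
                (gmul (gexp expR (psev h (pp R n)))
                      (gadd (gone R n) (gmul (pp R n) (psev g (pp R n)))))).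
Proof.
rewrite /berezin !gaddE !gmulM !gpowE goneE.
(* Y = B G is a central, square-zero perturbation of H inside exp. *)
set A : grass_ring R n := pp R n; set B : grass_ring R n := pJp R n.
set G : grass_ring R n := psev g A; set H : grass_ring R n := psev h A.
have evG : supp evs G := supp_psev mul_closed_evs supp_pp_even.
have evH : supp evs H := supp_psev mul_closed_evs supp_pp_even.
have BG1 : supp (dg 1) (B * G) := suppM_dg supp_pJp_dg1 (@supp_dg0 _ _ G).
have BGsq : B * G * (B * G) = 0.
  have BB : B * B = 0 := pJp_sq0 R n.
  by rewrite -mulrA (mulrA G) (even_comm evG B) !mulrA BB !mul0r.
rewrite gexp_add_sq0 //; last exact: even_comm evH _.
(* The order-0 terms agree; the order-1 terms agree by top_coef_pJp. *)
rewrite !mulrA !mulrDr !mulr1 !coefD; congr (_ + _).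
rewrite -(even_comm evG B) -(even_comm evG A) !mulrA.
apply: top_coef_pJp.
have pA : supp paired A := supp_pp_paired.
have pG : supp paired G := supp_psev mul_closed_paired pA.
apply: (suppMc mul_closed_paired) pG.
apply: (suppMc mul_closed_paired); first exact (supp_exp mul_closed_paired pA).
exact (supp_gexp mul_closed_paired (supp_psev mul_closed_paired pA)).
Qed.
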